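(* Let $g,h\in\mathcal{G}$ with $\Theta(g,h)<\infty$. If $g$ is slow-dropping and slow-jumping, then so is $h$.
   Context: $\mathcal{G}=\{g:\mathbb{Z}_{\ge0}\to\mathbb{R}: g(0)=0,\ g(1)=1,\ g(x)>0\ \forall x>0\}$. For $g,h\in\mathcal{G}$, $\Theta(g,h)=\sup_{x\in\mathbb{N}}|\log g(x)-\log h(x)|$ (an extended metric). $g$ is slow-jumping if for every $\alpha>0$ there is $N>0$ such that for all positive integers $x<y$ with $y\ge N$, $g(y)\le \lfloor y/x\rfloor^{2+\alpha}x^\alpha g(x)$. $g$ is slow-dropping if for every $\alpha>0$ there is $N>0$ such that for all $x<y$ with $y\ge N$, $g(y)\ge g(x)/y^\alpha$. *)

From Stdlib Require Import Reals Lra Lia.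
Open Scope R_scope.

Definition inG (g : nat -> R) : Prop :=
  g 0%nat = 0 /\ g 1%nat = 1 /\ forall x : nat, (0 < x)%nat -> 0 < g x.

(* Theta(g,h) < infinity : the sup over positive integers x of
   |log g x - log h x| is finite, i.e. these values are bounded. *)
Definition Theta_finite (g h : nat -> R) : Prop :=
  exists C : R, forall x : nat, (1 <= x)%nat -> Rabs (ln (g x) - ln (h x)) <= C.

Definition slow_jumping (g : nat -> R) : Prop :=
  forall alpha : R, 0 < alpha ->
  exists N : nat, (0 < N)%nat /\
    forall x y : nat, (0 < x)%nat -> (x < y)%nat -> (N <= y)%nat ->
      g y <= Rpower (INR (y / x)) (2 + alpha) * Rpower (INR x) alpha * g x.

Definition slow_dropping (g : nat -> R) : Prop :=
  forall alpha : R, 0 < alpha ->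
  exists N : nat, (0 < N)%nat /\
    forall x y : nat, (0 < x)%nat -> (x < y)%nat -> (N <= y)%nat ->
      g x / Rpower (INR y) alpha <= g y.

(* If |log g - log h| <= C then g and h agree up to the factor K = e^C. In
   both definitions the exponent alpha may be split as alpha/2 + alpha/2: one
   half is spent on the hypothesis for g, while the other produces a power
   y^(alpha/2) (resp. (floor(y/x) x)^(alpha/2), where floor(y/x) x > y/2)
   which eventually exceeds K^2 and so absorbs the two changes between g and h. *)

From Stdlib Require Import Reals Lra Lia.
Open Scope R_scope.

Lemma Rpower_gt0 (x y : R) : 0 < Rpower x y.
Proof. unfold Rpower; apply exp_pos. Qed.

Lemma Rpower_INR_eventually_ge (b M : R) : 0 < b ->
  exists N : nat, forall n : nat, (N <= n)%nat -> M <= Rpower (INR n) b.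
Proof.
  intros Hb.
  set (T := Rpower (Rmax M 1) (/ b)).
  destruct (INR_unbounded T) as [N HN].
  exists N; intros n Hn.
  assert (HNn : INR N <= INR n) by (apply le_INR; lia).
  apply Rle_trans with (Rpower T b).
  - assert (0 < Rmax M 1) by (pose proof (Rmax_r M 1); lra).
    unfold T; rewrite Rpower_mult, Rinv_l, Rpower_1 by lra.
    apply Rmax_l.
  - assert (0 < T) by apply Rpower_gt0; apply Rle_Rpower_l; lra.
Qed.

Lemma le_exp_Rabs_ln_sub (a b C : R) : 0 < a -> 0 < b ->
  Rabs (ln a - ln b) <= C -> b <= exp C * a.
Proof.
  intros Ha Hb HC.
  rewrite <- (exp_ln b) by exact Hb; rewrite <- (exp_ln a) by exact Ha.
  rewrite <- exp_plus.
  rewrite Rabs_minus_sym in HC; pose proof (Rle_abs (ln b - ln a)).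
  destruct (Rle_lt_or_eq_dec (ln b) (C + ln a)) as [Hlt | Heq]; [lra | |].
  - left; apply exp_increasing, Hlt.
  - right; f_equal; exact Heq.
Qed.

Lemma Theta_finite_comparable (g h : nat -> R) : inG g -> inG h -> Theta_finite g h ->
  exists K, 0 < K /\ forall x : nat, (1 <= x)%nat -> h x <= K * g x /\ g x <= K * h x.
Proof.
  intros (_ & _ & g_pos) (_ & _ & h_pos) [C HC].
  exists (exp C); split; [apply exp_pos|].
  intros x Hx; pose proof (HC x Hx) as HCx.
  split; apply le_exp_Rabs_ln_sub; try (apply g_pos || apply h_pos); try lia.
  - exact HCx.
  - rewrite Rabs_minus_sym; exact HCx.
Qed.

Lemma le_mul_div_half (x y : nat) : (0 < x)%nat -> (x < y)%nat -> (y <= 2 * ((y / x) * x))%nat.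
Proof.
  intros Hx Hxy.
  pose proof (Nat.div_mod y x ltac:(lia)); pose proof (Nat.mod_upper_bound y x ltac:(lia)).
  assert (1 <= y / x)%nat by (apply Nat.div_le_lower_bound; lia).
  nia.
Qed.

Section Transfer.

Variables (g h : nat -> R) (K : R).
Hypothesis K_gt0 : 0 < K.
Hypothesis h_pos : forall x : nat, (0 < x)%nat -> 0 < h x.
Hypothesis h_le_g : forall x : nat, (1 <= x)%nat -> h x <= K * g x.
Hypothesis g_le_h : forall x : nat, (1 <= x)%nat -> g x <= K * h x.

Lemma slow_dropping_comparable : slow_dropping g -> slow_dropping h.
Proof.
  intros SD a Ha.
  destruct (SD (a / 2) ltac:(lra)) as (N0 & HN0 & drop_g).
  destruct (Rpower_INR_eventually_ge (a / 2) (K * K) ltac:(lra)) as [N1 HN1].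
  exists (Nat.max N0 N1); split; [lia|].
  intros x y Hx Hxy Hy.
  set (P := Rpower (INR y) (a / 2)).
  assert (P_gt0 : 0 < P) by apply Rpower_gt0.
  assert (KK_le_P : K * K <= P) by (apply HN1; lia).
  assert (Rpower (INR y) a = P * P) as -> by (unfold P; rewrite <- Rpower_plus; f_equal; lra).
  pose proof (drop_g x y Hx Hxy ltac:(lia)) as Hdrop; fold P in Hdrop.
  assert (gx_le : g x <= g y * P).
  { apply Rmult_le_reg_r with (/ P); [apply Rinv_0_lt_compat, P_gt0|].
    rewrite Rmult_assoc, Rinv_r, Rmult_1_r by lra; exact Hdrop. }
  pose proof (h_pos y ltac:(lia)); pose proof (h_le_g x ltac:(lia)); pose proof (g_le_h y ltac:(lia)).
  apply Rmult_le_reg_r with (P * P); [nra|].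
  unfold Rdiv; rewrite Rmult_assoc, Rinv_l, Rmult_1_r by nra.
  apply Rle_trans with (K * (g y * P)); [nra|].
  apply Rle_trans with (K * K * P * h y).
  - replace (K * K * P * h y) with (K * ((K * h y) * P)) by ring.
    apply Rmult_le_compat_l; [lra|]; apply Rmult_le_compat_r; lra.
  - replace (h y * (P * P)) with (P * P * h y) by ring.
    apply Rmult_le_compat_r; [lra|]; apply Rmult_le_compat_r; lra.
Qed.

Lemma slow_jumping_comparable : slow_jumping g -> slow_jumping h.
Proof.
  intros SJ a Ha.
  destruct (SJ (a / 2) ltac:(lra)) as (N0 & HN0 & jump_g).
  destruct (Rpower_INR_eventually_ge (a / 2) (K * K) ltac:(lra)) as [N1 HN1].
  exists (Nat.max N0 (2 * N1)); split; [lia|].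
  intros x y Hx Hxy Hy.
  pose proof (jump_g x y Hx Hxy ltac:(lia)) as Hjump.
  pose proof (le_mul_div_half x y Hx Hxy).
  assert (1 <= y / x)%nat by (apply Nat.div_le_lower_bound; lia).
  set (q := (y / x)%nat) in *.
  set (A := Rpower (INR q) (2 + a / 2)) in *.
  set (Q := Rpower (INR q) (a / 2)).
  set (X := Rpower (INR x) (a / 2)) in *.
  assert (KK_le_QX : K * K <= Q * X).
  { unfold Q, X; rewrite Rpower_mult_distr, <- mult_INR by (apply lt_0_INR; lia).
    apply HN1; lia. }
  assert (Rpower (INR q) (2 + a) = A * Q) as -> by
    (unfold A, Q; rewrite <- Rpower_plus; f_equal; lra).
  assert (Rpower (INR x) a = X * X) as -> by
    (unfold X; rewrite <- Rpower_plus; f_equal; lra).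
  assert (0 < A) by apply Rpower_gt0.
  assert (0 < X) by apply Rpower_gt0.
  pose proof (h_pos x Hx); pose proof (g_le_h x ltac:(lia)); pose proof (h_le_g y ltac:(lia)).
  assert (hy_le : h y <= K * K * (A * X * h x)).
  { apply Rle_trans with (K * g y); [lra|].
    rewrite Rmult_assoc; apply Rmult_le_compat_l; [lra|].
    apply Rle_trans with (A * X * g x); [lra|].
    replace (K * (A * X * h x)) with (A * X * (K * h x)) by ring.
    apply Rmult_le_compat_l; [apply Rmult_le_pos|]; lra. }
  apply Rle_trans with (1 := hy_le).
  replace (A * Q * (X * X) * h x) with (Q * X * (A * X * h x)) by ring.
  apply Rmult_le_compat_r; [|exact KK_le_QX].
  apply Rmult_le_pos; [apply Rmult_le_pos|]; lra.
Qed.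

End Transfer.

Theorem proposition63 (g h : nat -> R) :
  inG g -> inG h -> Theta_finite g h ->
  slow_dropping g -> slow_jumping g ->
  slow_dropping h /\ slow_jumping h.
Proof.
  intros Gg Gh Theta SD SJ.
  destruct (Theta_finite_comparable g h Gg Gh Theta) as (K & K_gt0 & Hcomp).
  destruct Gh as (_ & _ & h_pos).
  assert (h_le_g : forall x, (1 <= x)%nat -> h x <= K * g x) by apply Hcomp.
  assert (g_le_h : forall x, (1 <= x)%nat -> g x <= K * h x) by apply Hcomp.
  split.
  - exact (slow_dropping_comparable g h K K_gt0 h_pos h_le_g g_le_h SD).
  - exact (slow_jumping_comparable g h K K_gt0 h_pos h_le_g g_le_h SJ).
Qed.
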